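(* Let $q$ be a prime power and let $C\subseteq \mathrm{GF}(q^m)^n$ be a (linear or nonlinear) code with $n\le m$, $|C|=q^{mk}$ for an integer $1\le k\le n$, and minimum rank distance $d_{\mathrm R}=n-k+1$. Let $r=n-k$ and $t=\lfloor (d_{\mathrm R}-1)/2\rfloor$. Then for every transmitted codeword $\mathbf c\in C$ and every integer $u$ with $d_{\mathrm R}-t\le u\le n$, the decoder error probability of the bounded rank distance decoder satisfies $$P_E(t;u)<\frac{q^{-t^2}}{K_q^{2}},\qquad\text{where } K_q=\prod_{j=1}^{\infty}(1-q^{-j}).$$
   Context: For $\mathbf x=(x_0,\dots,x_{n-1})\in\mathrm{GF}(q^m)^n$, the rank $\mathrm{rk}(\mathbf x)$ is the dimension over $\mathrm{GF}(q)$ of the $\mathrm{GF}(q)$-span of $x_0,\dots,x_{n-1}$ (equivalently, the rank of the $m\times n$ matrix over $\mathrm{GF}(q)$ obtained by expanding each coordinate in a fixed basis of $\mathrm{GF}(q^m)$ over $\mathrm{GF}(q)$). The rank distance is $d(\mathbf x,\mathbf y)=\mathrm{rk}(\mathbf x-\mathbf y)$, and the minimum rank distance of $C$ is the minimum of $\mathrm{rk}(\mathbf c-\mathbf d)$ over distinct $\mathbf c,\mathbf d\in C$. A codeword $\mathbf c$ is transmitted and $\mathbf y=\mathbf c+\mathbf e$ is received. The bounded rank distance decoder outputs the codeword $\mathbf c'\in C$ with $\mathrm{rk}(\mathbf y-\mathbf c')\le t$ if one exists (it is then unique), and declares a decoder failure otherwise. A decoder error occurs when it outputs a codeword $\mathbf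 c'\neq\mathbf c$. For $0\le u\le n$, $P_E(t;u)$ is the probability of decoder error when the error $\mathbf e$ is uniformly distributed over the set of vectors of $\mathrm{GF}(q^m)^n$ of rank exactly $u$. *)

From HB Require Import structures.
From mathcomp Require Import all_boot all_order all_algebra.
From mathcomp Require Import all_classical all_reals all_analysis.
Set Implicit Arguments. Unset Strict Implicit. Unset Printing Implicit Defensive.
Import Order.TTheory GRing.Theory Num.Theory numFieldNormedType.Exports.
Local Open Scope ring_scope.

(* A vector x in GF(q^m)^n is represented by its m x n expansion matrix over
   GF(q) = K (each coordinate expanded in a fixed GF(q)-basis of GF(q^m)). *)
Definition rk (K : fieldType) (m n : nat) (x : 'M[K]_(m, n)) : nat := \rank x.

Definition min_rank_dist (K : finFieldType) (m n : nat)
  (C : {set 'M[K]_(m, n)}) (d : nat) : Prop :=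
  (forall c c', c \in C -> c' \in C -> c != c' -> (d <= rk (c - c'))%N) /\
  (exists c c', [/\ c \in C, c' \in C, c != c' & rk (c - c') = d]).

(* Decoder error event for the bounded rank distance decoder with radius t:
   c transmitted, y = c + e received; the decoder outputs some codeword
   c' <> c with rk(y - c') <= t. *)
Definition dec_error (K : finFieldType) (m n : nat)
  (C : {set 'M[K]_(m, n)}) (t : nat) (c e : 'M[K]_(m, n)) : bool :=
  [exists c' in C, (c' != c) && (rk (c + e - c') <= t)%N].

(* P_E(t;u) for transmitted codeword c: error uniform over rank-u vectors. *)
Definition PE (R : realType) (K : finFieldType) (m n : nat)
  (C : {set 'M[K]_(m, n)}) (c : 'M[K]_(m, n)) (t u : nat) : R :=
  (#|[set e : 'M[K]_(m, n) | (rk e == u) && dec_error C t c e]|%:R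
   / #|[set e : 'M[K]_(m, n) | rk e == u]|%:R).

Definition Kq (R : realType) (q : nat) : R :=
  let P : R^nat := fun N => \prod_(1 <= j < N.+1) (1 - (q%:R ^- j)) in
  limn P.

(* The group GL_m x GL_n acts transitively on the m x n matrices of rank u
   by (M, P) . e = M e P, so P_E(t;u) is the proportion of pairs (M, P) for
   which M e0 P is a decoding error, for one fixed e0 of rank u.  Such a pair
   comes with a matrix z of rank <= t for which M (e0 + z) P is a nonzero
   difference of codewords.  For fixed z and P, minimum distance r + 1 leaves
   at most q^(m(m-r)) choices of M (a Singleton-type injection), and the
   matrices of rank <= t are at most q^(mt+tn) / |GL_t| in number.  With
   |GL_a| = q^(a^2) pi_a, where pi_a = prod_(j <= a) (1 - q^-j) decreases
   strictly to K_q > 0, this gives P_E <= q^(-t^2) / (pi_m pi_t) < q^(-t^2) / K_q^2. *)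

From HB Require Import structures.
From mathcomp Require Import all_boot all_order all_algebra.
From mathcomp Require Import all_classical all_reals all_analysis.
From mathcomp Require Import zify ring lra.
Import Order.TTheory GRing.Theory Num.Theory numFieldNormedType.Exports.
Local Open Scope ring_scope.

Set Implicit Arguments.
Unset Strict Implicit.
Unset Printing Implicit Defensive.

Section RankEquivalence.
Variable K : fieldType.

Lemma mxrank_unit_mulmx m n (M : 'M[K]_m) (A : 'M[K]_(m, n)) (P : 'M[K]_n) :
  M \in unitmx -> P \in unitmx -> \rank (M *m A *m P) = \rank A.
Proof.
move=> uM uP; rewrite mxrankMfree ?row_free_unit // -mxrank_tr trmx_mul.
by rewrite mxrankMfree ?mxrank_tr // row_free_unit unitmx_tr.
Qed.

Lemma eq_rank_equiv m n (A B : 'M[K]_(m, n)) : \rank A = \rank B ->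
  exists M P, [/\ M \in unitmx, P \in unitmx & B = M *m A *m P].
Proof.
move=> rAB; have eA := mulmx_ebase A; have eB := mulmx_ebase B.
have uA1 := col_ebase_unit A; have uA2 := row_ebase_unit A.
exists (col_ebase B *m invmx (col_ebase A)), (invmx (row_ebase A) *m row_ebase B).
split; rewrite ?unitmx_mul ?unitmx_inv ?col_ebase_unit ?row_ebase_unit //.
move: eA eB uA1 uA2; set cA := col_ebase A; set rA := row_ebase A => eA eB uA1 uA2.
by rewrite -{1}eB -eA rAB !mulmxA mulmxKV // mulmxK.
Qed.

End RankEquivalence.

Lemma card_fibres_sum (T U : finType) (S : {set T}) (g : T -> U) (B : {set U}) :
  #|[set x in S | g x \in B]| = (\sum_(y in B) #|[set x in S | g x == y]|)%N.
Proof.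
rewrite -sum1_card (partition_big g (mem B)); last by move=> x; rewrite inE => /andP[].
apply: eq_bigr => y yB; rewrite -sum1_card; apply: eq_bigl => x.
rewrite !inE; case: (x \in S) => //=.
by case: eqP => [->|]; rewrite ?andbF ?andbT.
Qed.

Lemma leq_card_bigcup (T I : finType) (J : {set I}) (F : I -> {set T}) :
  (#|\bigcup_(i in J) F i| <= \sum_(i in J) #|F i|)%N.
Proof.
elim/big_rec2: _ => [|i U s _ IH]; first by rewrite cards0.
by rewrite (leq_trans (leq_card_setU _ _).1) // leq_add2l.
Qed.

Lemma card_slices_le (T U : finType) (S : {set T * U}) (B : {set U}) (b : nat) :
  {in S, forall p, p.2 \in B} ->
  {in B, forall y, #|[set x | (x, y) \in S]| <= b}%N ->
  (#|S| <= #|B| * b)%N.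
Proof.
move=> SB hb; have -> : S = [set p in S | p.2 \in B].
  by apply/setP => p; rewrite inE; case: (boolP (p \in S)) => // /SB ->.
rewrite card_fibres_sum -sum_nat_const leq_sum // => y yB.
have pair_inj : injective (fun x : T => (x, y)) by move=> x x' [].
apply: leq_trans (hb y yB); rewrite -(card_imset _ pair_inj).
apply/subset_leq_card/fintype.subsetP => -[x y']; rewrite !inE /= => /andP[xS /eqP ey].
by apply/imsetP; exists x; rewrite ?inE -?ey.
Qed.

Section GeneralLinearAction.
Variable K : finFieldType.

Definition GL_set a := [set M : 'M[K]_a | M \in unitmx].

Lemma GL_set_gt0 a : (0 < #|GL_set a|)%N.
Proof. by apply/card_gt0P; exists 1%:M; rewrite inE unitmx1. Qed.

Lemma card_GL_set a :
  #|GL_set a| = (#|K| ^ 'C(a, 2) * \prod_(1 <= i < a.+1) (#|K| ^ i - 1))%N.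
Proof.
case: a => [|a]; last first.
  by rewrite -card_GL // cardsT card_sub; apply: eq_card => A; rewrite !inE.
rewrite big_geq // muln1 bin_small // expn0; apply/eqP; rewrite eqn_leq GL_set_gt0.
by rewrite (leq_trans (max_card _)) // card_mx.
Qed.

Variables m n : nat.

Definition GL_pair := finset.setX (GL_set m) (GL_set n).

Definition mx_act (e : 'M[K]_(m, n)) (h : 'M[K]_m * 'M[K]_n) := h.1 *m e *m h.2.

Lemma mem_GL_pair h : (h \in GL_pair) = (h.1 \in unitmx) && (h.2 \in unitmx).
Proof. by rewrite !inE. Qed.

Lemma mxrank_act e h : h \in GL_pair -> \rank (mx_act e h) = \rank e.
Proof. by rewrite mem_GL_pair => /andP[u1 u2]; rewrite mxrank_unit_mulmx. Qed.

Lemma card_act_fibre e y : \rank y = \rank e ->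
  #|[set h in GL_pair | mx_act e h == y]| = #|[set h in GL_pair | mx_act e h == e]|.
Proof.
move=> rye; have [M0 [P0 [uM uP ->]]] := eq_rank_equiv (esym rye).
pose g (h : 'M[K]_m * 'M[K]_n) := (M0 *m h.1, h.2 *m P0).
pose g' (h : 'M[K]_m * 'M[K]_n) := (invmx M0 *m h.1, h.2 *m invmx P0).
have gK : cancel g g' by move=> [M P]; rewrite /g /g' /= mulKmx // mulmxK.
have g'K : cancel g' g by move=> [M P]; rewrite /g /g' /= mulKVmx // mulmxKV.
have actK : injective (fun X : 'M[K]_(m, n) => M0 *m X *m P0).
  apply: (can_inj (g := fun X => invmx M0 *m X *m invmx P0)) => X.
  by rewrite !mulmxA mulVmx // mul1mx mulmxK.
rewrite -(card_imset _ (can_inj g'K)); apply: eq_card => h.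
rewrite -[h in LHS]gK (mem_imset _ _ (can_inj g'K)) !inE /g /mx_act /= !unitmx_mul.
by rewrite uM uP /= andbT -[in RHS](inj_eq actK) !mulmxA.
Qed.

Lemma card_act_preim e (S : {set 'M[K]_(m, n)}) :
  {in S, forall y, \rank y = \rank e} ->
  (#|[set h in GL_pair | mx_act e h \in S]|
     * #|[set y : 'M[K]_(m, n) | \rank y == \rank e]|
   = #|S| * #|GL_pair|)%N.
Proof.
set f := #|[set h in GL_pair | mx_act e h == e]|.
have card_preim (S' : {set 'M[K]_(m, n)}) : {in S', forall y, \rank y = \rank e} ->
    #|[set h in GL_pair | mx_act e h \in S']| = (#|S'| * f)%N.
  move=> rS'; rewrite card_fibres_sum -sum_nat_const.
  by apply: eq_bigr => y yS; rewrite card_act_fibre ?rS'.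
have -> : #|GL_pair| = (#|[set y : 'M[K]_(m, n) | \rank y == \rank e]| * f)%N.
  rewrite -card_preim; last by move=> y; rewrite inE => /eqP.
  apply: eq_card => h; rewrite [in RHS]inE; case: (boolP (h \in GL_pair)) => //= hG.
  by rewrite inE mxrank_act ?eqxx.
by move=> rS; rewrite card_preim // mulnAC mulnA.
Qed.

End GeneralLinearAction.

Section MatrixCounting.
Variable K : finFieldType.

Lemma sum_mul_delta p (F : 'I_p -> K) (k : 'I_p) (b : 'I_p -> bool) :
  \sum_(j < p) F j * ((j == k :> nat) && b j)%:R = F k * (b k)%:R.
Proof.
rewrite (bigD1 k) //= eqxx big1 ?addr0 // => j njk.
by rewrite val_eqE (negbTE njk) mulr0.
Qed.

Definition lastcols_mx m r : 'M[K]_(m, m - r) :=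
  \matrix_(i, j) (i == (r + j)%N :> nat)%:R.

Lemma lastcols_mx_eq0 m r (N : 'M[K]_m) :
  N *m lastcols_mx m r = 0 -> N = N *m pid_mx r.
Proof.
move=> hN; apply/matrixP => i k; rewrite mxE.
under eq_bigr => j _ do rewrite mxE.
rewrite sum_mul_delta; case: (ltnP k r) => kr; first by rewrite mulr1.
have kr' : (k - r < m - r)%N by rewrite ltn_sub2r // (leq_ltn_trans kr).
rewrite mulr0.
have := congr1 (fun A : 'M[K]_(m, m - r) => A i (Ordinal kr')) hN; rewrite !mxE => <-.
under eq_bigr => j _ do rewrite /lastcols_mx mxE /= subnKC // -[_ == _]andbT.
by rewrite sum_mul_delta mulr1.
Qed.

Lemma card_rank_le_GL m n t : (t <= n)%N ->
  (#|[set z : 'M[K]_(m, n) | \rank z <= t]| * #|GL_set K t|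
     <= #|K| ^ (m * t) * #|K| ^ (t * n))%N.
Proof.
move=> htn.
pose L (z : 'M[K]_(m, n)) : 'M[K]_(m, t) := col_ebase z *m pid_mx (\rank z).
pose U (z : 'M[K]_(m, n)) : 'M[K]_(t, n) := pid_mx t *m row_ebase z.
have LU z : (\rank z <= t)%N -> L z *m U z = z.
  move=> hz; rewrite /L /U mulmxA -(mulmxA (col_ebase z)) mul_pid_mx.
  by rewrite (minn_idPl hz) (minn_idPr hz) mulmx_ebase.
have U_rinv z : U z *m (invmx (row_ebase z) *m pid_mx t) = 1%:M.
  rewrite /U mulmxA mulmxK ?row_ebase_unit // mul_pid_mx minnn.
  by rewrite (minn_idPr htn) pid_mx_1.
pose psi (p : 'M[K]_(m, n) * 'M[K]_t) := (L p.1 *m invmx p.2, p.2 *m U p.1).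
set B := [set z | _].
have psi_inj : {in finset.setX B (GL_set K t) &, injective psi}.
  move=> [z S] [z' S']; rewrite !inE /= => /andP[hz uS] /andP[hz' uS'] [e1 e2].
  have factor x T : T \in unitmx -> (\rank x <= t)%N ->
      x = (L x *m invmx T) *m (T *m U x).
    by move=> uT hx; rewrite mulmxA mulmxKV // LU.
  have ezz : z = z' by rewrite (factor z S uS hz) (factor z' S' uS' hz') e1 e2.
  subst z'; congr (_, _).
  have := congr1 (fun X => X *m (invmx (row_ebase z) *m (pid_mx t : 'M[K]_(n, t)))) e2.
  by rewrite /= -(mulmxA S) -(mulmxA S') U_rinv !mulmx1.
rewrite -cardsX -(card_in_imset psi_inj).
by rewrite (leq_trans (max_card _)) // card_prod !card_mx.
Qed.

End MatrixCounting.

Section RankMetricCode.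
Variables (K : finFieldType) (m n r : nat) (C : {set 'M[K]_(m, n)}) (c : 'M[K]_(m, n)).
Hypothesis C_dist : {in C &, forall c1 c2, c1 != c2 -> (r < \rank (c1 - c2)%R)%N}.
Hypothesis cC : c \in C.
Hypothesis rm : (r <= m)%N.

Lemma card_mulmx_codeword_le (y : 'M[K]_(m, n)) :
  (#|[set M : 'M[K]_m | ((c + M *m y \in C) && (M *m y != 0))%R]|
    <= #|K| ^ (m * (m - r)))%N.
Proof.
set S := [set M | _].
have rank_gt (x : 'M[K]_(m, n)) : c + x \in C -> x != 0 -> (r < \rank x)%N.
  move=> cxC x0; have := C_dist cxC cC; rewrite addrAC subrr add0r.
  by apply; rewrite -subr_eq0 addrAC subrr add0r.
have [yr | ry] := leqP (\rank y) r.
  suff -> : S = finset.set0 by rewrite cards0.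
  apply/setP => M; rewrite !inE; apply/negP => /andP[/rank_gt hM /hM].
  by rewrite ltnNge (leq_trans (mxrankM_maxr _ _)).
have := mulmx_ebase y; have uE := col_ebase_unit y; have uF := row_ebase_unit y.
have wn := rank_leq_col y.
move: (col_ebase y) (row_ebase y) (\rank y) ry wn uE uF => E F w rw wn uE uF ey.
(* If M1 E and M2 E agree off their first r columns, c + M1 y and c + M2 y are
   within rank distance r, hence equal; as rank y > r, this forces M1 = M2. *)
pose phi (M : 'M[K]_m) := M *m E *m lastcols_mx K m r.
suff phi_inj : {in S &, injective phi}.
  by rewrite -(card_in_imset phi_inj) (leq_trans (max_card _)) // card_mx.
move=> M1 M2; rewrite !inE => /andP[C1 _] /andP[C2 _] /eqP.
rewrite -subr_eq0 -!mulmxBl => /eqP/lastcols_mx_eq0; set N := (M1 - M2) *m E => NK.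
have diffE : M1 *m y - M2 *m y = N *m pid_mx w *m F by rewrite -mulmxBl -ey !mulmxA.
have same : M1 *m y = M2 *m y.
  apply/eqP/negPn/negP => ne; have := C_dist C1 C2.
  rewrite (inj_eq (addrI c)) opprD addrACA subrr add0r diffE NK => /(_ ne).
  rewrite ltnNge (leq_trans (mxrankM_maxl _ _)) // (leq_trans (mxrankM_maxl _ _)) //.
  by rewrite (leq_trans (mxrankM_maxr _ _)) // rank_pid_mx.
have Nw : N *m (pid_mx w : 'M[K]_(m, n)) = 0.
  by rewrite -[LHS](mulmxK uF) -diffE same subrr mul0mx.
have N0 : N = 0.
  have pid_wr : (pid_mx w : 'M[K]_(m, n)) *m (pid_mx r : 'M[K]_(n, m)) = pid_mx r.
    by rewrite mul_pid_mx (minn_idPr (ltnW rw)) (minn_idPr (leq_trans (ltnW rw) wn)).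
  by rewrite NK -pid_wr mulmxA Nw mul0mx.
by apply/eqP; rewrite -subr_eq0 -(mulmxK uE (M1 - M2)) -/N N0 mul0mx.
Qed.

Lemma card_act_dec_error t (e0 : 'M[K]_(m, n)) :
  (#|[set h in GL_pair K m n | dec_error C t c (mx_act e0 h)]|
    <= #|[set z : 'M[K]_(m, n) | \rank z <= t]|
       * (#|GL_set K n| * #|K| ^ (m * (m - r))))%N.
Proof.
set Bt := [set z : 'M[K]_(m, n) | _].
pose F (z : 'M[K]_(m, n)) := [set h in GL_pair K m n |
  ((c + mx_act (e0 + z) h \in C) && (mx_act (e0 + z) h != 0))%R].
have cover : [set h in GL_pair K m n | dec_error C t c (mx_act e0 h)]
    \subset \bigcup_(z in Bt) F z.
  apply/fintype.subsetP => -[M P]; rewrite inE mem_GL_pair /=.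
  case/andP=> /andP[uM uP] /existsP[c' /and3P[c'C c'c]]; rewrite /rk => c'_near.
  apply/finset.bigcupP; exists (invmx M *m (c' - c) *m invmx P - e0).
    rewrite inE (_ : _ - e0 = invmx M *m - (c + mx_act e0 (M, P) - c') *m invmx P).
      by rewrite mxrank_unit_mulmx ?unitmx_inv // mxrank_opp.
    rewrite /mx_act /= opprB opprD addrA !mulmxBr !mulmxBl !mulmxA.
    by rewrite mulVmx // mul1mx mulmxK.
  rewrite /F inE mem_GL_pair uM uP /=.
  have -> : mx_act (e0 + (invmx M *m (c' - c) *m invmx P - e0)) (M, P) = c' - c.
    by rewrite /mx_act addrC subrK /= !mulmxA mulmxV // mul1mx mulmxKV.
  by rewrite addrC subrK c'C subr_eq0.
apply: leq_trans (subset_leq_card cover) _; apply: leq_trans (leq_card_bigcup _ _) _.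
rewrite -sum_nat_const leq_sum // => z _.
apply: card_slices_le => [h|P uP].
  by rewrite inE mem_GL_pair => /andP[/andP[_ uP] _]; rewrite inE.
apply: leq_trans (card_mulmx_codeword_le ((e0 + z) *m P)).
apply/subset_leq_card/fintype.subsetP => M; rewrite !inE /mx_act /= -!mulmxA.
by case/andP.
Qed.

Lemma card_dec_error_rank t u : (u <= m)%N -> (u <= n)%N ->
  (#|[set e : 'M[K]_(m, n) | (\rank e == u) && dec_error C t c e]| * #|GL_set K m|
    <= #|[set e : 'M[K]_(m, n) | \rank e == u]|
       * (#|[set z : 'M[K]_(m, n) | \rank z <= t]| * #|K| ^ (m * (m - r))))%N.
Proof.
move=> um un; set Bad := [set e | _ && _]; set RU := [set e | \rank e == u].
pose e0 : 'M[K]_(m, n) := pid_mx u.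
have re0 : \rank e0 = u by rewrite rank_pid_mx.
have preim : (#|[set h in GL_pair K m n | mx_act e0 h \in Bad]| * #|RU|
              = #|Bad| * #|GL_pair K m n|)%N.
  rewrite (_ : RU = [set y | \rank y == \rank e0]); last by apply/setP => y; rewrite !inE re0.
  by apply: card_act_preim => y; rewrite inE re0 => /andP[/eqP].
rewrite -(leq_pmul2r (GL_set_gt0 K n)) -mulnA -cardsX -preim mulnC.
rewrite -mulnA leq_mul2l; apply/orP; right.
have sub : [set h in GL_pair K m n | mx_act e0 h \in Bad]
    \subset [set h in GL_pair K m n | dec_error C t c (mx_act e0 h)].
  by apply/fintype.subsetP => h; rewrite !inE => /andP[-> /andP[_ ->]].
apply: leq_trans (subset_leq_card sub) (leq_trans (card_act_dec_error t e0) _).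
by rewrite mulnA mulnAC.
Qed.

Lemma card_dec_error_le t u :
  (t.*2 <= r)%N -> (t <= n)%N -> (n <= m)%N -> (u <= n)%N ->
  (#|[set e : 'M[K]_(m, n) | (\rank e == u) && dec_error C t c e]|
     * #|GL_set K m| * #|GL_set K t|
    <= #|[set e : 'M[K]_(m, n) | \rank e == u]| * #|K| ^ (m * m))%N.
Proof.
move=> tr tn nm un; have q_gt0 : (0 < #|K|)%N by apply/card_gt0P; exists 0.
have exp_le : (m * t + t * n + m * (m - r) <= m * m)%N.
  have tn_mt : (t * n <= m * t)%N by rewrite mulnC leq_mul2r nm orbT.
  have mt_mr : (2 * (m * t) <= m * r)%N by rewrite mulnCA leq_mul2l mul2n tr orbT.
  have -> : (m * m = m * (m - r) + m * r)%N by rewrite -mulnDr subnK.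
  move: tn_mt mt_mr; move: (m * t)%N (t * n)%N (m * r)%N => x y z; lia.
apply: (leq_trans (leq_mul (card_dec_error_rank t (leq_trans un nm) un) (leqnn _))).
rewrite -mulnA leq_mul2l mulnAC; apply/orP; right.
apply: (leq_trans (leq_mul (card_rank_le_GL K m tn) (leqnn _))).
by rewrite -!expnD leq_pexp2l.
Qed.

End RankMetricCode.

Section PartialProducts.
Variables (R : realType) (q : nat).
Hypothesis q_gt1 : (1 < q)%N.

Definition Kq_partial N : R := \prod_(1 <= j < N.+1) (1 - q%:R ^- j).

Let a : R := q%:R^-1.

Let a_gt0 : 0 < a.
Proof. by rewrite invr_gt0 ltr0n (ltn_trans _ q_gt1). Qed.

Let a_le_half : a <= 1/2.
Proof. by rewrite mul1r lef_pV2 ?posrE ?ltr0n ?(ltn_trans _ q_gt1) // ler_nat. Qed.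

Let aX_lt1 j : a ^+ j.+1 < 1.
Proof. by rewrite exprn_ilt1 ?(ltW a_gt0) //; have := a_le_half; lra. Qed.

Lemma Kq_partial0 : Kq_partial 0 = 1.
Proof. by rewrite /Kq_partial big_geq. Qed.

Lemma Kq_partialS N : Kq_partial N.+1 = Kq_partial N * (1 - a ^+ N.+1).
Proof. by rewrite /Kq_partial big_nat_recr //= exprVn. Qed.

Lemma Kq_partial_gt0 N : 0 < Kq_partial N.
Proof.
elim: N => [|N IH]; first by rewrite Kq_partial0.
by rewrite Kq_partialS mulr_gt0 // subr_gt0 aX_lt1.
Qed.

Lemma Kq_partial_ltS N : Kq_partial N.+1 < Kq_partial N.
Proof.
rewrite Kq_partialS -subr_gt0 -{1}[Kq_partial N]mulr1 -mulrBr opprB addrC subrK.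
by rewrite mulr_gt0 ?Kq_partial_gt0 ?exprn_gt0.
Qed.

Lemma Kq_partial_nonincr : nonincreasing_seq Kq_partial.
Proof. by apply/nonincreasing_seqP => N; apply/ltW/Kq_partial_ltS. Qed.

Lemma Kq_partial_gt_quarter N : 1/4 < Kq_partial N.
Proof.
(* The slack (1/2)^(k+1) pays for the next factor:
   pi_k a^(k+1) <= (1 - a) a (1/2)^k <= (1/2)^(k+2). *)
suff bound k : (0 < k)%N -> 1/4 + (1/2) ^+ k.+1 <= Kq_partial k.
  case: N => [|N]; first by rewrite Kq_partial0; lra.
  apply: lt_le_trans _ (bound N.+1 isT); rewrite ltrDl exprn_gt0 //; lra.
elim: k => [//|[_ _|k IH _]].
  by rewrite Kq_partialS Kq_partial0 mul1r expr1 expr2; have := a_le_half; lra.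
have {}IH := IH isT.
have le1 : Kq_partial k.+1 <= 1 - a.
  by rewrite -(expr1 a) -[1 - _]mul1r -{1}Kq_partial0 -Kq_partialS; exact: Kq_partial_nonincr.
rewrite Kq_partialS !(exprS _ k.+1); set p := Kq_partial k.+1 in IH le1 *.
have AH : a ^+ k.+1 <= (1/2) ^+ k.+1 by rewrite lerXn2r ?nnegrE ?(ltW a_gt0) //; lra.
have aA0 : 0 <= a * a ^+ k.+1 by rewrite mulr_ge0 ?exprn_ge0 ?(ltW a_gt0).
have h1 : p * (a * a ^+ k.+1) <= (1 - a) * (a * a ^+ k.+1) by rewrite ler_wpM2r.
have h2 : (1 - a) * a <= 1/4 by have := sqr_ge0 (a - 1/2); nra.
have h3 : (1 - a) * (a * a ^+ k.+1) <= 1/4 * a ^+ k.+1.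
  by rewrite mulrA ler_wpM2r ?exprn_ge0 ?(ltW a_gt0).
rewrite 2!exprS; rewrite exprS in IH; lra.
Qed.

Lemma Kq_partial_cvg : cvgn Kq_partial.
Proof.
apply: nonincreasing_is_cvgn Kq_partial_nonincr _.
by exists 0 => _ [N _ <-]; apply/ltW/Kq_partial_gt0.
Qed.

Lemma Kq_le_partial N : Kq R q <= Kq_partial N.
Proof. exact: nonincreasing_cvgn_ge Kq_partial_nonincr Kq_partial_cvg N. Qed.

Lemma Kq_gt0 : 0 < Kq R q.
Proof.
suff : 1/4 <= Kq R q by lra.
by apply: limr_ge Kq_partial_cvg _; apply: nearW => N; apply/ltW/Kq_partial_gt_quarter.
Qed.

Lemma ratio_lt_Kq (x y m t : nat) : (0 < y)%N ->
  x%:R * (q%:R ^+ (m * m) * Kq_partial m) * (q%:R ^+ (t * t) * Kq_partial t)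
    <= y%:R * q%:R ^+ (m * m) ->
  x%:R / y%:R < q%:R ^- (t * t) / Kq R q ^+ 2.
Proof.
move=> y_gt0 hxy; have Q0 : 0 < q%:R :> R by rewrite ltr0n (ltn_trans _ q_gt1).
have pm0 := Kq_partial_gt0 m; have pt0 := Kq_partial_gt0 t; have K0 := Kq_gt0.
have Qt0 : 0 < q%:R ^+ (t * t) :> R by rewrite exprn_gt0.
have KK : Kq R q ^+ 2 < Kq_partial m * Kq_partial t.
  apply: (@le_lt_trans _ _ (Kq R q * Kq_partial t)).
    by rewrite expr2 ler_pM2l ?Kq_le_partial.
  by rewrite ltr_pM2r // (le_lt_trans (Kq_le_partial m.+1) (Kq_partial_ltS m)).
have xD : x%:R * (Kq_partial m * Kq_partial t * q%:R ^+ (t * t)) <= y%:R.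
  rewrite -(ler_pM2r (exprn_gt0 (m * m) Q0)); apply: le_trans hxy.
  by rewrite le_eqVlt; apply/orP; left; apply/eqP; ring.
apply: (@le_lt_trans _ _ (Kq_partial m * Kq_partial t * q%:R ^+ (t * t))^-1).
  by rewrite ler_pdivrMr ?ltr0n // mulrC ler_pdivlMr // !mulr_gt0.
by rewrite -invfM ltf_pV2 ?posrE ?mulr_gt0 ?exprn_gt0 // mulrC ltr_pM2r.
Qed.

End PartialProducts.

Lemma natr_card_GL_set (R : realType) (K : finFieldType) a :
  (#|GL_set K a|%:R : R) = #|K|%:R ^+ (a * a) * Kq_partial R #|K| a.
Proof.
have Q0 : (#|K|%:R : R) != 0 by rewrite pnatr_eq0 -lt0n; apply/card_gt0P; exists 0.
rewrite card_GL_set; elim: a => [|a IH].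
  by rewrite big_geq // bin_small // Kq_partial0 expn0 muln1 mul0n expr0 mulr1.
rewrite binS bin1 expnD big_nat_recr //= mulnACA natrM IH Kq_partialS natrM.
rewrite natrB ?expn_gt0 ?(leq_trans _ (card_finNzRing_gt1 K)) // !natrX exprVn.
have -> : (a.+1 * a.+1 = a * a + a + a.+1)%N by lia.
by rewrite !exprD; field; rewrite !expf_neq0.
Qed.

Theorem proposition6 (R : realType) (q m n k : nat) (K : finFieldType)
  (HK : #|K| = q) (C : {set 'M[K]_(m, n)})
  (Hnm : (n <= m)%N) (Hk1 : (1 <= k)%N) (Hkn : (k <= n)%N)
  (HC : #|C| = (q ^ (m * k))%N)
  (Hd : min_rank_dist C (n - k + 1)) :
  let t := ((n - k + 1 - 1)./2)%N in
  forall (c : 'M[K]_(m, n)) (u : nat), c \in C ->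
    (n - k + 1 - t <= u)%N -> (u <= n)%N ->
    PE R C c t u < (q%:R : R) ^- (t * t) / (Kq R q) ^+ 2.
Proof.
move=> t c u cC _ un; subst q.
have C_dist : {in C &, forall c1 c2, c1 != c2 -> (n - k < \rank (c1 - c2)%R)%N}.
  by move=> c1 c2 c1C c2C; rewrite -addn1; apply: Hd.1.
have tr : (t.*2 <= n - k)%N by rewrite /t addnK -{2}(odd_double_half (n - k)) leq_addl.
have rm : (n - k <= m)%N by rewrite (leq_trans (leq_subr _ _)).
have tn : (t <= n)%N.
  by rewrite (leq_trans _ (leq_subr k n)) // (leq_trans _ tr) // -addnn leq_addr.
apply: (@ratio_lt_Kq R _ (card_finNzRing_gt1 K) _ _ m t).
  by apply/card_gt0P; exists (pid_mx u); rewrite inE /rk rank_pid_mx // (leq_trans un).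
rewrite -!natr_card_GL_set -natrX -!natrM ler_nat /rk.
exact (card_dec_error_le C_dist cC rm tr tn Hnm un).
Qed.
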